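(* Let $0<n<m$ be real numbers, $N\ge 2$ an integer, and let $V(r)=-\frac{c_n}{r^n}+\frac{c_m}{r^m}$ for $r>0$, where $c_n,c_m>0$ are chosen so that $V$ attains its minimum at $a=\frac1N$. Let $\kappa=V''(a)$ and $f>0$, and consider \[ U(z_1,\dots,z_{N-1})=\sum_{k=1}^{N-1}V(z_k-z_{k-1})-f\,z_{N-1},\qquad z_0=0, \] on the set $0=z_0<z_1<\dots<z_{N-1}$. Call a fixed point a configuration in this set at which $\partial U/\partial z_k=0$ for all $k=1,\dots,N-1$ (i.e. an equilibrium, with zero momenta, of the Hamiltonian $H=\sum_{k=1}^{N-1}\frac{p_k^2}{2m_0}+U$ for any particle mass $m_0>0$). Then a fixed point exists if and only if \[ \sigma:=\frac{f}{\kappa}\le \frac{C}{N},\qquad C=C(n,m)=\frac{1}{m-n}\left(\Bigl(\frac{m+1}{n+1}\Bigr)^{-\frac{n+1}{m-n}}-\Bigl(\frac{m+1}{n+1}\Bigr)^{-\frac{m+1}{m-n}}\right). \] *)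

From Stdlib Require Import Reals Lra Lia.
From Coquelicot Require Import Coquelicot.
Open Scope R_scope.

Definition LJV (n m cn cm : R) (r : R) : R :=
  - cn / Rpower r n + cm / Rpower r m.

Definition Cnm (n m : R) : R :=
  / (m - n) *
  ( Rpower ((m + 1) / (n + 1)) (- ((n + 1) / (m - n)))
  - Rpower ((m + 1) / (n + 1)) (- ((m + 1) / (m - n))) ).

Fixpoint chain_sum (V : R -> R) (z : nat -> R) (K : nat) : R :=
  match K with
  | O => 0
  | S j => chain_sum V z j + V (z (S j) - z j)
  end.

Definition chainU (V : R -> R) (f : R) (N : nat) (z : nat -> R) : R :=
  chain_sum V z (N - 1) - f * z (N - 1)%nat.

Definition upd (z : nat -> R) (k : nat) (t : R) : nat -> R :=
  fun i => if Nat.eqb i k then t else z i.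

Definition admissible (N : nat) (z : nat -> R) : Prop :=
  z O = 0 /\ forall k, (k < N - 1)%nat -> z k < z (S k).

Definition is_fixed_point (V : R -> R) (f : R) (N : nat) (z : nat -> R) : Prop :=
  admissible N z /\
  forall k, (1 <= k <= N - 1)%nat ->
    is_derive (fun t => chainU V f N (upd z k t)) (z k) 0.

From Stdlib Require Import Reals Lra Lia.
From Coquelicot Require Import Coquelicot.
Open Scope R_scope.

(* At a fixed point every bond carries the same tension: the last equation
   dU/dz_{N-1} = 0 reads V'(z_{N-1} - z_{N-2}) = f, and conversely the uniformly
   stretched chain with V'(r) = f balances every particle.  So a fixed point
   exists iff f > 0 is a value of V' on (0, oo).  The force V' vanishes at the
   minimum a, increases up to the inflection point s = a q^(1/(m-n)) with
   q = (m+1)/(n+1), and decreases afterwards; hence the condition is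
   f <= V'(s), and a direct computation gives V'(s) = V''(a) C a. *)

Lemma Rpower_pos x y : 0 < Rpower x y.
Proof. apply exp_pos. Qed.

Lemma is_derive_Rpower y x : 0 < x ->
  is_derive (fun t => Rpower t y) x (y * Rpower x (y - 1)).
Proof. intros Hx; apply is_derive_Reals, derivable_pt_lim_power, Hx. Qed.

Lemma Derive_Derive_eq (V g : R -> R) (x l : R) :
  0 < x -> (forall r, 0 < r -> is_derive V r (g r)) -> is_derive g x l ->
  Derive (Derive V) x = l.
Proof.
  intros Hx HV Hg.
  apply is_derive_unique, (is_derive_ext_loc g); [|exact Hg].
  apply (filter_imp (fun t => 0 < t)); [|exact (open_gt 0 x Hx)].
  intros t Ht; symmetry; apply is_derive_unique, HV, Ht.
Qed.

Lemma le_at_derivative_sign_change (g h : R -> R) (s r : R) : 0 < s -> 0 < r ->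
  (forall c, 0 < c -> is_derive g c (h c)) ->
  (forall c, 0 < c < s -> 0 < h c) -> (forall c, s < c -> h c < 0) ->
  g r <= g s.
Proof.
  intros Hs Hr Hg Hup Hdown.
  assert (Hlim : forall x y, 0 < x -> forall c, x <= c <= y -> derivable_pt_lim g c (h c))
    by (intros x y Hx c Hc; apply is_derive_Reals, Hg; lra).
  destruct (Rtotal_order r s) as [Hrs|[->|Hsr]]; [| lra |].
  - destruct (MVT_cor2 g h r s Hrs (Hlim r s Hr)) as [c [Hc Hcrs]].
    assert (0 < h c) by (apply Hup; lra).
    nra.
  - destruct (MVT_cor2 g h s r Hsr (Hlim s r Hs)) as [c [Hc Hcrs]].
    assert (h c < 0) by (apply Hdown; lra).
    nra.
Qed.

Section Chain.
Variables V g : R -> R.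
Hypothesis V_derive : forall r, 0 < r -> is_derive V r (g r).

Lemma is_derive_bond z k j : z j < z (S j) ->
  is_derive (fun t => V (upd z k t (S j) - upd z k t j)) (z k)
    (if S j =? k then g (z (S j) - z j)
     else if j =? k then - g (z (S j) - z j) else 0).
Proof.
  intros Hj; unfold upd.
  destruct (Nat.eqb_spec (S j) k) as [<-|Hk1]; [|destruct (Nat.eqb_spec j k) as [<-|Hk2]].
  - rewrite (proj2 (Nat.eqb_neq j (S j))) by lia.
    rewrite <- (scal_one (g _)).
    apply (is_derive_comp V (fun t => t - z j)); [apply V_derive; lra|].
    auto_derive; [easy|reflexivity].
  - replace (- g _) with (scal (opp (one : R_Ring)) (g (z (S j) - z j)))
      by (rewrite scal_opp_one; reflexivity).
    apply (is_derive_comp V (fun t => z (S j) - t)); [apply V_derive; lra|].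
    auto_derive; [easy|reflexivity].
  - apply (is_derive_const (V (z (S j) - z j))).
Qed.

Definition chain_sum_partial (z : nat -> R) (k K : nat) : R :=
  (if k <=? K then g (z k - z (k - 1)%nat) else 0)
  - (if k <? K then g (z (S k) - z k) else 0).

Lemma is_derive_chain_sum z k K : (1 <= k)%nat ->
  (forall j, (j < K)%nat -> z j < z (S j)) ->
  is_derive (fun t => chain_sum V (upd z k t) K) (z k) (chain_sum_partial z k K).
Proof.
  intros Hk; induction K as [|K IH]; intros Hz.
  - unfold chain_sum_partial; destruct k as [|k]; [lia|].
    rewrite Rminus_0_r; apply (is_derive_const 0).
  - replace (chain_sum_partial z k (S K)) with
      (chain_sum_partial z k K +
       (if S K =? k then g (z (S K) - z K)
        else if K =? k then - g (z (S K) - z K) else 0)).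
    + apply (is_derive_plus _ _ _ _ _ (IH (fun j Hj => Hz j ltac:(lia)))).
      apply is_derive_bond, Hz; lia.
    + unfold chain_sum_partial.
      destruct (Nat.eqb_spec (S K) k), (Nat.eqb_spec K k), (Nat.leb_spec k K),
        (Nat.leb_spec k (S K)), (Nat.ltb_spec k K), (Nat.ltb_spec k (S K));
        try lia; subst; rewrite ?Nat.sub_succ, ?Nat.sub_0_r; ring.
Qed.

Lemma is_derive_chainU f N z k : (1 <= k <= N - 1)%nat ->
  (forall j, (j < N - 1)%nat -> z j < z (S j)) ->
  is_derive (fun t => chainU V f N (upd z k t)) (z k)
    (g (z k - z (k - 1)%nat) - (if k <? N - 1 then g (z (S k) - z k) else f)).
Proof.
  intros Hk Hz; unfold chainU.
  replace (g _ - _) with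
    (chain_sum_partial z k (N - 1) - f * (if N - 1 =? k then 1 else 0)).
  - apply (is_derive_minus (fun t => chain_sum V (upd z k t) (N - 1))
             (fun t => f * upd z k t (N - 1)%nat)).
    + apply is_derive_chain_sum; [lia | exact Hz].
    + apply is_derive_scal; unfold upd.
      destruct (N - 1 =? k).
      * apply (is_derive_id (K := R_AbsRing)).
      * apply (is_derive_const (z (N - 1)%nat)).
  - unfold chain_sum_partial.
    destruct (Nat.leb_spec k (N - 1)), (Nat.ltb_spec k (N - 1)),
      (Nat.eqb_spec (N - 1) k); try lia; ring.
Qed.

Lemma fixed_point_iff_bond_force f N : (2 <= N)%nat ->
  (exists z, is_fixed_point V f N z) <-> exists r, 0 < r /\ g r = f.
Proof.
  intros HN; split.
  - intros [z [[_ Hz] Hcrit]].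
    exists (z (N - 1)%nat - z (N - 1 - 1)%nat).
    assert (Hlast : z (N - 1 - 1)%nat < z (S (N - 1 - 1))) by (apply Hz; lia).
    replace (S (N - 1 - 1)) with (N - 1)%nat in Hlast by lia.
    split; [lra|].
    pose proof (is_derive_unique _ _ _ (Hcrit (N - 1)%nat ltac:(lia))) as H0.
    rewrite (is_derive_unique _ _ _ (is_derive_chainU f N z (N - 1) ltac:(lia) Hz)),
      Nat.ltb_irrefl in H0.
    lra.
  - intros [r [Hr Hgr]].
    set (z := fun i : nat => INR i * r).
    assert (Hbond : forall j, z (S j) - z j = r)
      by (intros j; unfold z; rewrite S_INR; ring).
    assert (Hz : forall j, (j < N - 1)%nat -> z j < z (S j))
      by (intros j _; specialize (Hbond j); lra).
    exists z; split; [split; [unfold z; simpl; ring | exact Hz]|].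
    intros k Hk.
    replace 0 with (g (z k - z (k - 1)%nat) -
                    (if k <? N - 1 then g (z (S k) - z k) else f)).
    + apply is_derive_chainU; assumption.
    + destruct k as [|k]; [lia|].
      rewrite Nat.sub_succ, Nat.sub_0_r, !Hbond, Hgr.
      destruct (S k <? N - 1); ring.
Qed.
End Chain.

Section LennardJones.
Variables n m cn cm : R.

Definition lj_force (r : R) : R :=
  n * cn * Rpower r (- n - 1) - m * cm * Rpower r (- m - 1).

Definition lj_stiffness (r : R) : R :=
  m * (m + 1) * cm * Rpower r (- m - 2) - n * (n + 1) * cn * Rpower r (- n - 2).

Lemma LJV_Rpower r : LJV n m cn cm r = cm * Rpower r (- m) - cn * Rpower r (- n).
Proof. unfold LJV; rewrite !Rpower_Ropp; unfold Rdiv; ring. Qed.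

Lemma is_derive_LJV r : 0 < r -> is_derive (LJV n m cn cm) r (lj_force r).
Proof.
  intros Hr.
  apply (is_derive_ext (fun t => cm * Rpower t (- m) - cn * Rpower t (- n))).
  { intros t; symmetry; apply LJV_Rpower. }
  replace (lj_force r) with
    (cm * (- m * Rpower r (- m - 1)) - cn * (- n * Rpower r (- n - 1)))
    by (unfold lj_force; ring).
  apply (is_derive_minus (fun t => cm * Rpower t (- m)) (fun t => cn * Rpower t (- n)));
    apply is_derive_scal, is_derive_Rpower, Hr.
Qed.

Lemma is_derive_lj_force r : 0 < r -> is_derive lj_force r (lj_stiffness r).
Proof.
  intros Hr.
  replace (lj_stiffness r) with
    (n * cn * ((- n - 1) * Rpower r (- n - 1 - 1))
     - m * cm * ((- m - 1) * Rpower r (- m - 1 - 1)))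
    by (unfold lj_stiffness; replace (- n - 1 - 1) with (- n - 2) by ring;
        replace (- m - 1 - 1) with (- m - 2) by ring; ring).
  apply (is_derive_minus (fun t => n * cn * Rpower t (- n - 1))
           (fun t => m * cm * Rpower t (- m - 1)));
    apply is_derive_scal, is_derive_Rpower, Hr.
Qed.

Hypothesis n_pos : 0 < n.
Hypothesis n_lt_m : n < m.
Hypothesis cn_pos : 0 < cn.
Variable a : R.
Hypothesis a_pos : 0 < a.
Hypothesis LJV_min : forall r, 0 < r -> LJV n m cn cm a <= LJV n m cn cm r.

Lemma lj_force_min : lj_force a = 0.
Proof.
  assert (HL : derivable_pt_lim (LJV n m cn cm) a (lj_force a))
    by (apply is_derive_Reals, is_derive_LJV, a_pos).
  rewrite <- (derive_pt_eq_0 _ _ _ (exist _ _ HL) HL).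
  apply (deriv_minimum _ (a / 2) (2 * a)); [lra | lra |].
  intros x Hx _; apply LJV_min; lra.
Qed.

Lemma cm_at_min : m * cm = n * cn * Rpower a (m - n).
Proof.
  assert (H : (n * cn * Rpower a (- n - 1) - m * cm * Rpower a (- m - 1))
              * Rpower a (m + 1) = 0)
    by (fold (lj_force a); rewrite lj_force_min; ring).
  rewrite Rmult_minus_distr_r, !Rmult_assoc, <- !Rpower_plus in H.
  replace (- n - 1 + (m + 1)) with (m - n) in H by ring.
  replace (- m - 1 + (m + 1)) with 0 in H by ring.
  rewrite Rpower_O in H by exact a_pos.
  lra.
Qed.

Let q := (m + 1) / (n + 1).

Lemma q_gt_1 : 1 < q.
Proof. unfold q; apply Rlt_div_r; lra. Qed.

(* The zero of V'' = [lj_stiffness], where the force V' is maximal. *)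
Definition lj_inflection : R := a * Rpower q (/ (m - n)).

Lemma Rpower_lj_inflection p :
  Rpower lj_inflection p = Rpower a p * Rpower q (p / (m - n)).
Proof.
  unfold lj_inflection.
  rewrite <- Rpower_mult_distr, Rpower_mult by (exact a_pos || apply Rpower_pos).
  do 2 f_equal; field; lra.
Qed.

Lemma lj_inflection_pow : Rpower lj_inflection (m - n) = q * Rpower a (m - n).
Proof.
  rewrite Rpower_lj_inflection.
  replace ((m - n) / (m - n)) with 1 by (field; lra).
  rewrite Rpower_1 by (pose proof q_gt_1; lra); ring.
Qed.

Lemma a_lt_lj_inflection : a < lj_inflection.
Proof.
  unfold lj_inflection.
  rewrite <- (Rmult_1_r a) at 1; apply Rmult_lt_compat_l; [exact a_pos|].
  rewrite <- (Rpower_O q) by (pose proof q_gt_1; lra).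
  apply Rpower_lt; [exact q_gt_1 | apply Rinv_0_lt_compat; lra].
Qed.

Lemma lj_stiffness_factor c : lj_stiffness c =
  n * (n + 1) * cn * Rpower c (- m - 2)
  * (Rpower lj_inflection (m - n) - Rpower c (m - n)).
Proof.
  unfold lj_stiffness; rewrite lj_inflection_pow.
  replace (Rpower c (- n - 2)) with (Rpower c (- m - 2) * Rpower c (m - n))
    by (rewrite <- Rpower_plus; f_equal; ring).
  replace (m * (m + 1) * cm) with ((m + 1) * (m * cm)) by ring.
  rewrite cm_at_min; unfold q; field; lra.
Qed.

Lemma lj_stiffness_pos c : 0 < c < lj_inflection -> 0 < lj_stiffness c.
Proof.
  intros Hc; rewrite lj_stiffness_factor.
  assert (Rpower c (m - n) < Rpower lj_inflection (m - n))
    by (apply Rlt_Rpower_l; lra).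
  assert (0 < n * (n + 1) * cn * Rpower c (- m - 2))
    by (pose proof (Rpower_pos c (- m - 2)); repeat apply Rmult_lt_0_compat; lra).
  apply Rmult_lt_0_compat; lra.
Qed.

Lemma lj_stiffness_neg c : lj_inflection < c -> lj_stiffness c < 0.
Proof.
  intros Hc; rewrite lj_stiffness_factor.
  assert (0 < a) by exact a_pos; pose proof a_lt_lj_inflection.
  assert (Rpower lj_inflection (m - n) < Rpower c (m - n))
    by (apply Rlt_Rpower_l; lra).
  assert (0 < n * (n + 1) * cn * Rpower c (- m - 2))
    by (pose proof (Rpower_pos c (- m - 2)); repeat apply Rmult_lt_0_compat; lra).
  nra.
Qed.

Lemma lj_force_le_inflection r : 0 < r -> lj_force r <= lj_force lj_inflection.
Proof.
  intros Hr; apply (le_at_derivative_sign_change _ lj_stiffness); auto.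
  - pose proof a_lt_lj_inflection; lra.
  - exact is_derive_lj_force.
  - exact lj_stiffness_pos.
  - exact lj_stiffness_neg.
Qed.

Lemma lj_force_inflection :
  lj_force lj_inflection = lj_stiffness a * (Cnm n m * a).
Proof.
  unfold lj_force, Cnm; rewrite lj_stiffness_factor, lj_inflection_pow,
    !Rpower_lj_inflection, cm_at_min.
  assert (Ha : 0 < a) by exact a_pos.
  replace (Rpower a (- n - 1))
    with (Rpower a (- m - 2) * Rpower a (m - n) * Rpower a 1)
    by (rewrite <- !Rpower_plus; f_equal; ring).
  replace (Rpower a (- m - 1)) with (Rpower a (- m - 2) * Rpower a 1)
    by (rewrite <- !Rpower_plus; f_equal; ring).
  replace ((- n - 1) / (m - n)) with (- ((n + 1) / (m - n))) by (field; lra).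
  replace ((- m - 1) / (m - n)) with (- ((m + 1) / (m - n))) by (field; lra).
  rewrite Rpower_1 by exact Ha.
  unfold q; field; lra.
Qed.

Lemma lj_force_range f : 0 < f ->
  (exists r, 0 < r /\ lj_force r = f) <-> f <= lj_force lj_inflection.
Proof.
  intros Hf; split.
  - intros [r [Hr <-]]; apply lj_force_le_inflection, Hr.
  - intros Hle; pose proof a_lt_lj_inflection; assert (0 < a) by exact a_pos.
    destruct (Rle_lt_or_eq_dec _ _ Hle) as [Hlt|Heq].
    2:{ exists lj_inflection; split; [lra | symmetry; exact Heq]. }
    destruct (Ranalysis5.IVT_interv (lj_force - fct_cte f)%F a lj_inflection)
      as [r [Hr Hfr]]; unfold minus_fct, fct_cte in *.
    + intros x Hx; apply continuity_pt_minus.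
      * apply derivable_continuous_pt; exists (lj_stiffness x).
        apply is_derive_Reals, is_derive_lj_force; lra.
      * apply continuity_pt_const; intros ? ?; reflexivity.
    + assumption.
    + rewrite lj_force_min; lra.
    + lra.
    + exists r; split; lra.
Qed.
End LennardJones.

Theorem lemma1 (n m cn cm f : R) (N : nat) :
  0 < n -> n < m -> (2 <= N)%nat ->
  0 < cn -> 0 < cm ->
  (forall r, 0 < r -> LJV n m cn cm (/ INR N) <= LJV n m cn cm r) ->
  0 < f ->
  (exists z : nat -> R, is_fixed_point (LJV n m cn cm) f N z) <->
  f / Derive (Derive (LJV n m cn cm)) (/ INR N) <= Cnm n m / INR N.
Proof.
  intros Hn Hnm HN Hcn _ Hmin Hf.
  set (a := / INR N).
  assert (Ha : 0 < a) by (apply Rinv_0_lt_compat, lt_0_INR; lia).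
  assert (Hkappa : 0 < lj_stiffness n m cn cm a).
  { apply (lj_stiffness_pos n m cn cm Hn Hnm Hcn a Ha Hmin); split; [exact Ha|].
    apply (a_lt_lj_inflection n m Hn Hnm a Ha). }
  rewrite (fixed_point_iff_bond_force _ _ (is_derive_LJV n m cn cm) f N HN),
    (lj_force_range n m cn cm Hn Hnm Hcn a Ha Hmin f Hf),
    (lj_force_inflection n m cn cm Hn Hnm a Ha Hmin),
    (Derive_Derive_eq _ _ a _ Ha (is_derive_LJV n m cn cm)
       (is_derive_lj_force n m cn cm a Ha)).
  rewrite Rle_div_l by exact Hkappa.
  unfold Rdiv; rewrite (Rmult_comm _ (Cnm n m * a)); reflexivity.
Qed.
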